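(* Let $W:\Omega^2\to[0,1]$ be a graphon and $F$ a graph on vertex set $[k]$. Suppose that $\mathfrak{c}:\Omega\to[0,1]$ is a fractional $F$-cover of $W$ and that $\mathfrak{t}:\Omega^k\to[0,1]$ is an $F$-tiling in $W$. Then $\|\mathfrak{t}\|\le\|\mathfrak{c}\|$.
   Context: $(\Omega,\nu)$ is an atomless Borel probability space; a graphon is a symmetric measurable $W:\Omega^2\to[0,1]$. $W^{\otimes F}(x_1,\dots,x_k)=\prod_{ij\in E(F),i<j}W(x_i,x_j)$ and $\mathcal{F}_F(W)=\{W^{\otimes F}\neq0\}$. An $F$-tiling in $W$ is a measurable $\mathfrak{t}:\Omega^k\to[0,\infty)$ with $\{\mathfrak{t}\neq0\}\subset\mathcal{F}_F(W)$ such that for each $x\in\Omega$, $\sum_{\ell=1}^k\int\mathfrak{t}(x_1,\dots,x_{\ell-1},x,x_{\ell+1},\dots,x_k)\,\mathrm{d}\nu^{k-1}\le1$ (integrating over all coordinates except the $\ell$-th); its size is $\|\mathfrak{t}\|=\int\mathfrak{t}\,\mathrm{d}\nu^k$. A fractional $F$-cover of $W$ is a measurable $\mathfrak{c}:\Omega\to[0,1]$ with $\nu^k\big(\mathcal{F}_F(W)\cap\{(x_1,\dots,x_k):\sum_{i=1}^k\mathfrak{c}(x_i)<1\}\big)=0$; its size is $\|\mathfrak{c}\|=\int\mathfrak{c}\,\mathrm{d}\nu$. *)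

From HB Require Import structures.
From mathcomp Require Import all_boot all_order all_algebra.
From mathcomp Require Import all_classical all_reals all_analysis.
Set Implicit Arguments. Unset Strict Implicit. Unset Printing Implicit Defensive.
Import Order.TTheory GRing.Theory Num.Theory.
Local Open Scope classical_set_scope.
Local Open Scope ring_scope.

Section graphon_defs.
Context {d : measure_display} {T : measurableType d} {R : realType}.

(** The k-fold product measure nu^k on Omega^k = k.-tuple T (product
    sigma-algebra, from MathComp-Analysis), built by iterating the binary
    product measure: nu^0 is the Dirac mass at the empty tuple and
    nu^(k+1)(A) = (nu x nu^k)({(x,s) | x :: s \in A}). *)
Local Unset Implicit Arguments.
Fixpoint prod_meas (mu : set T -> \bar R) (k : nat) : set (k.-tuple T) -> \bar R :=
  match k return set (k.-tuple T) -> \bar R with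
  | 0 => fun A => ((\1_A [tuple]) : R)%:E
  | k'.+1 => fun A =>
      (mu \x prod_meas mu k')%E
        ((fun p : T * k'.-tuple T => [tuple of p.1 :: p.2]) @^-1` A)
  end.
Local Set Implicit Arguments.

Definition graph_tensor (k : nat) (F : rel 'I_k) (W : T -> T -> R)
    (x : k.-tuple T) : R :=
  \prod_(i < k) \prod_(j < k | (i < j)%N && F i j) W (tnth x i) (tnth x j).

Definition support_F (k : nat) (F : rel 'I_k) (W : T -> T -> R) :
    set (k.-tuple T) :=
  [set x | graph_tensor F W x != 0].

Definition insert_at (k : nat) (l : 'I_k) (x : T) (s : (k.-1).-tuple T) :
    k.-tuple T :=
  [tuple (if (i < l)%N then nth x s i
          else if i == l :> nat then x else nth x s i.-1) | i < k].

Definition graphon (mu : set T -> \bar R) (W : T -> T -> R) : Prop :=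
  [/\ measurable_fun [set: T * T] (fun p => W p.1 p.2),
      (forall x y, W x y = W y x) &
      (forall x y, 0 <= W x y <= 1)].

Definition F_tiling (mu : set T -> \bar R) (k : nat) (F : rel 'I_k)
    (W : T -> T -> R) (t : k.-tuple T -> R) : Prop :=
  [/\ measurable_fun [set: k.-tuple T] t,
      (forall x, 0 <= t x),
      [set x | t x != 0] `<=` support_F F W &
      (forall x : T,
        (\sum_(l < k)
            \int[prod_meas mu k.-1]_s (t (insert_at l x s))%:E <= 1)%E)].

Definition tiling_size (mu : set T -> \bar R) (k : nat)
    (t : k.-tuple T -> R) : \bar R :=
  (\int[prod_meas mu k]_x (t x)%:E)%E.

Definition fractional_F_cover (mu : set T -> \bar R) (k : nat)
    (F : rel 'I_k) (W : T -> T -> R) (c : T -> R) : Prop :=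
  [/\ measurable_fun [set: T] c,
      (forall x, 0 <= c x <= 1) &
      prod_meas mu k
        (support_F F W `&` [set x | \sum_(i < k) c (tnth x i) < 1]) = 0%E].

Definition cover_size (mu : set T -> \bar R) (c : T -> R) : \bar R :=
  (\int[mu]_x (c x)%:E)%E.

End graphon_defs.

Definition standard_borel {d : measure_display} (T : measurableType d)
    (R : realType) : Prop :=
  exists (B : set R) (f : T -> R) (g : R -> T),
    [/\ measurable B, measurable_fun [set: T] f, measurable_fun B g,
        (forall x, B (f x) /\ g (f x) = x) &
        (forall y, B y -> f (g y) = y)].

Definition atomless {d : measure_display} {T : measurableType d}
    {R : realType} (mu : set T -> \bar R) : Prop :=
  forall A : set T, measurable A -> (0 < mu A)%E ->
    exists2 B : set T, measurable B /\ B `<=` A &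
      (0 < mu B)%E /\ (mu B < mu A)%E.

From HB Require Import structures.
From mathcomp Require Import all_boot all_order all_algebra.
From mathcomp Require Import all_classical all_reals all_analysis.
From mathcomp Require Import measurable_realfun.
Import Order.TTheory GRing.Theory Num.Theory.
Local Open Scope classical_set_scope.
Local Open Scope ring_scope.

(* Weak LP duality. Since \sum_i c(x_i) >= 1 for almost every x in F_F(W),
   which contains {t <> 0}, ||t|| <= \int t(x) \sum_i c(x_i) dnu^k. The product
   measure is exchangeable: by Fubini-Tonelli the i-th summand may be integrated
   with x_i = y outermost, which turns the bound into
   \int c(y) \sum_i \int t(x_1,..,x_(i-1),y,x_(i+1),..,x_k) dnu^(k-1) dy,
   and the tiling condition bounds the inner sum by 1. For k = 0 there is no
   fractional cover at all: the empty tuple lies in F_F(W) with c-sum 0 < 1. *)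

Lemma fubini_tonelli_outer {d1 d2 d3 : measure_display} {T1 : measurableType d1}
    {T2 : measurableType d2} {T3 : measurableType d3} {R : realType}
    (m1 : {sigma_finite_measure set T1 -> \bar R})
    (m2 : {sigma_finite_measure set T2 -> \bar R})
    (m3 : {sigma_finite_measure set T3 -> \bar R}) (f : T1 * T2 * T3 -> \bar R) :
  measurable_fun setT f -> (forall z, (0 <= f z)%E) ->
  (\int[m1]_x \int[m2]_y \int[m3]_z f (x, y, z) =
   \int[m2]_y \int[m1]_x \int[m3]_z f (x, y, z))%E.
Proof.
move=> mf f0; apply: (fubini_tonelli (fubini_F m3 f)).
- exact: measurable_fun_fubini_tonelli_F.
- by move=> p; apply: integral_ge0.
Qed.

Lemma ge0_le_integral_mulr_ae {d : measure_display} {X : measurableType d} {R : realType}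
    (mu : {measure set X -> \bar R}) (f g : X -> R) :
  measurable_fun setT f -> measurable_fun setT g ->
  (forall x, 0 <= f x) -> (forall x, 0 <= g x) ->
  {ae mu, forall x, f x != 0 -> 1 <= g x} ->
  (\int[mu]_x (f x)%:E <= \int[mu]_x (f x * g x)%:E)%E.
Proof.
move=> mf mg f0 g0 fg1; apply: ae_ge0_le_integral => //.
- by move=> x _; rewrite lee_fin.
- exact/measurable_EFinP.
- by move=> x _; rewrite lee_fin mulr_ge0.
- exact/measurable_EFinP/measurable_funM.
apply: filterS fg1 => x fg1 _; rewrite lee_fin.
have [->|/fg1] := eqVneq (f x) 0; first by rewrite mul0r.
exact: ler_peMr.
Qed.

Section insert_at.
Context {d : measure_display} {T : measurableType d}.

Lemma tnth_insert_at k (l : 'I_k) (x : T) (s : k.-1.-tuple T) :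
  tnth (insert_at l x s) l = x.
Proof. by rewrite /insert_at tnth_mktuple ltnn eqxx. Qed.

Lemma insert_at0 k (x : T) (s : k.-tuple T) :
  insert_at (ord0 : 'I_k.+1) x s = [tuple of x :: s].
Proof.
apply: eq_from_tnth => i; rewrite /insert_at tnth_mktuple (tnth_nth x) /=.
by case: i => [[|i] ?].
Qed.

Lemma insert_at_lift0 n (l : 'I_n.+1) (x y : T) (s : n.-tuple T) :
  insert_at (lift ord0 l) x [tuple of y :: s] = [tuple of y :: insert_at l x s].
Proof.
apply: eq_from_tnth => i; rewrite /insert_at tnth_mktuple (tnth_nth x) /=.
case: i => [[|j] /= Hj] //; rewrite /bump add1n.
have jn : (j < size (enum 'I_n.+1))%N by rewrite size_enum_ord.
rewrite ltnS eqSS (nth_map ord0 _ _ jn) nth_enum_ord -?size_enum_ord //.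
case: ifP => // jl; case: ifP => // jl2.
by case: j jl jl2 {Hj jn} => [|j] //=; case: (nat_of_ord l).
Qed.

End insert_at.

Section insert_at_measurable.
Context {d d1 : measure_display} {T : measurableType d} {U : measurableType d1}.

Lemma measurable_nth k (g : U -> T) (h : U -> k.-tuple T) j :
  measurable_fun setT g -> measurable_fun setT h ->
  measurable_fun setT (fun u => nth (g u) (h u) j).
Proof.
move=> mg mh; have [jk|jk] := ltnP j k.
  rewrite (_ : (fun u => _) = (fun u => tnth (h u) (Ordinal jk))); last first.
    by apply/funext => u; rewrite (tnth_nth (g u)).
  exact: (measurableT_comp (measurable_tnth (Ordinal jk)) mh).
rewrite (_ : (fun u => _) = g) //.
by apply/funext => u; rewrite nth_default // size_tuple.
Qed.

Lemma measurable_insert_at k (l : 'I_k) (g : U -> T) (h : U -> k.-1.-tuple T) :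
  measurable_fun setT g -> measurable_fun setT h ->
  measurable_fun setT (fun u => insert_at l (g u) (h u)).
Proof.
move=> mg mh; apply/measurable_fun_tnthP => i /=.
rewrite (_ : _ \o _ = fun u => if (i < l)%N then nth (g u) (h u) i
    else if i == l :> nat then g u else nth (g u) (h u) i.-1); last first.
  by apply/funext => u /=; rewrite /insert_at tnth_mktuple.
case: (i < l)%N; first exact: measurable_nth.
by case: (i == l :> nat) => //; exact: measurable_nth.
Qed.

End insert_at_measurable.

Section product_probability.
Context {d : measure_display} {T : measurableType d} {R : realType}.
Variable nu : probability T R.
Local Open Scope ereal_scope.

Definition cons_mfun k : {mfun (T * k.-tuple T)%type >-> k.+1.-tuple T} :=
  HB.pack (fun p : (T * k.-tuple T)%type => [tuple of p.1 :: p.2])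
    (isMeasurableFun.Build _ _ _ _ _ (measurable_cons measurable_fst measurable_snd)).

(* [prod_meas] is a bare set function; realizing it as a probability makes the
   integration lemmas applicable to it. *)
Lemma prod_meas_probability k :
  {P : probability (k.-tuple T) R | forall A, P A = prod_meas nu k A}.
Proof.
elim: k => [|k [P PE]]; first by exists (\d_[tuple] : probability _ R).
exists (distribution (nu \x P) (cons_mfun k)) => A.
rewrite /distribution /pushforward /=.
by congr (product_measure1 _ _ _); apply/funext => B; rewrite PE.
Qed.

Definition prod_prob k : probability (k.-tuple T) R :=
  sval (prod_meas_probability k).

Lemma prod_probE k : prod_prob k = prod_meas nu k :> (set _ -> \bar R).
Proof. by apply/funext => A; rewrite /prod_prob; case: prod_meas_probability. Qed.

Lemma integral_prod_prob_cons k (f : k.+1.-tuple T -> \bar R) :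
  measurable_fun setT f -> (forall x, 0 <= f x) ->
  \int[prod_prob k.+1]_x f x = \int[nu]_x \int[prod_prob k]_s f [tuple of x :: s].
Proof.
move=> mf f0.
have -> : prod_prob k.+1 = pushforward (nu \x prod_prob k) (cons_mfun k)
    :> (set _ -> \bar R).
  by apply/funext => A; rewrite !prod_probE.
rewrite ge0_integral_pushforward // preimage_setT.
rewrite (fubini_tonelli1 (f \o cons_mfun k)) //.
- exact: measurableT_comp.
- by move=> p; exact: f0.
Qed.

Lemma integral_prod_prob_insert_at0 n (f : n.+1.-tuple T -> \bar R) :
  measurable_fun setT f -> (forall x, 0 <= f x) ->
  \int[prod_prob n.+1]_x f x = \int[nu]_x \int[prod_prob n]_s f (insert_at ord0 x s).
Proof.
move=> mf f0; rewrite integral_prod_prob_cons //.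
by apply: eq_integral => x _; apply: eq_integral => s _; rewrite insert_at0.
Qed.

(* Induction on n: split off the first coordinate and move it past the
   inserted one with Fubini-Tonelli. *)
Lemma integral_prod_prob_insert_at n (l : 'I_n.+1) (f : n.+1.-tuple T -> \bar R) :
  measurable_fun setT f -> (forall x, 0 <= f x) ->
  \int[prod_prob n.+1]_x f x = \int[nu]_x \int[prod_prob n]_s f (insert_at l x s).
Proof.
elim: n l f => [|n IH] l f mf f0;
  have [l' ->|->] := unliftP ord0 l; try exact: integral_prod_prob_insert_at0.
  by case: l'.
have mf_cons y : measurable_fun setT (fun u : n.+1.-tuple T => f [tuple of y :: u]).
  by apply: measurableT_comp mf _; apply: measurable_cons.
have mf_insert x : measurable_fun setT (fun u => f (insert_at (lift ord0 l') x u)).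
  by apply: measurableT_comp mf _; apply: measurable_insert_at.
rewrite integral_prod_prob_cons //.
under eq_integral do rewrite (IH l') //.
pose G (p : T * T * n.-tuple T) := f [tuple of p.1.1 :: insert_at l' p.1.2 p.2].
have mG : measurable_fun setT G.
  apply: measurableT_comp mf _; apply: measurable_cons.
    exact: measurableT_comp measurable_fst measurable_fst.
  apply: measurable_insert_at => //.
  exact: measurableT_comp measurable_snd measurable_fst.
rewrite (fubini_tonelli_outer _ _ _ G) // => [|p]; last exact: f0.
apply: eq_integral => x _; rewrite integral_prod_prob_cons //.
by under [RHS]eq_integral do under eq_integral do rewrite insert_at_lift0.
Qed.

Lemma integral_mul_tnth n (i : 'I_n.+1) (t : n.+1.-tuple T -> R) (c : T -> R) :
  measurable_fun setT t -> measurable_fun setT c ->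
  (forall x, (0 <= t x)%R) -> (forall y, (0 <= c y)%R) ->
  \int[prod_prob n.+1]_x (t x * c (tnth x i))%:E =
  \int[nu]_y ((c y)%:E * \int[prod_prob n]_s (t (insert_at i y s))%:E).
Proof.
move=> mt mc t0 c0; rewrite (integral_prod_prob_insert_at _ i).
- apply: eq_integral => y _; rewrite -ge0_integralZl_EFin //.
  + by apply: eq_integral => s _; rewrite tnth_insert_at EFinM muleC.
  + by move=> s _; rewrite lee_fin.
  + by apply/measurable_EFinP; apply: measurableT_comp mt _; exact: measurable_insert_at.
- apply/measurable_EFinP; apply: measurable_funM => //.
  exact: measurableT_comp mc (measurable_tnth i).
- by move=> x; rewrite lee_fin mulr_ge0.
Qed.

Lemma measurable_integral_insert_at n (i : 'I_n.+1) (t : n.+1.-tuple T -> R) :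
  measurable_fun setT t -> (forall x, (0 <= t x)%R) ->
  measurable_fun setT (fun y => \int[prod_prob n]_s (t (insert_at i y s))%:E).
Proof.
move=> mt t0; apply: (measurable_fun_fubini_tonelli_F
  (fun p : (T * n.-tuple T)%type => (t (insert_at i p.1 p.2))%:E)).
- by apply/measurable_EFinP; apply: measurableT_comp mt _; exact: measurable_insert_at.
- by move=> p; rewrite lee_fin.
Qed.

Lemma integral_mul_sum_tnth n (t : n.+1.-tuple T -> R) (c : T -> R) :
  measurable_fun setT t -> measurable_fun setT c ->
  (forall x, (0 <= t x)%R) -> (forall y, (0 <= c y)%R) ->
  \int[prod_prob n.+1]_x (t x * \sum_(i < n.+1) c (tnth x i))%:E =
  \int[nu]_y ((c y)%:E *
    \sum_(i < n.+1) \int[prod_prob n]_s (t (insert_at i y s))%:E).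
Proof.
move=> mt mc t0 c0.
have load_ge0 (i : 'I_n.+1) y : 0 <= \int[prod_prob n]_s (t (insert_at i y s))%:E.
  by apply: integral_ge0 => s _; rewrite lee_fin.
under eq_integral do rewrite mulr_sumr -sumEFin.
rewrite ge0_integral_sum //; last 2 first.
- move=> i; apply/measurable_EFinP/measurable_funM => //.
  exact: measurableT_comp mc (measurable_tnth i).
- by move=> i x _; rewrite lee_fin mulr_ge0.
under eq_bigr do rewrite integral_mul_tnth //.
rewrite -ge0_integral_sum //; last 2 first.
- move=> i; apply: emeasurable_funM; first exact/measurable_EFinP.
  exact: measurable_integral_insert_at.
- by move=> i y _; rewrite mule_ge0 ?lee_fin.
by apply: eq_integral => y _; rewrite ge0_sume_distrr.
Qed.

End product_probability.

Section graph_support.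
Context {d : measure_display} {T : measurableType d} {R : realType}.
Context {W : T -> T -> R} (mW : measurable_fun setT (fun p : T * T => W p.1 p.2)).

Lemma measurable_graph_tensor k (F : rel 'I_k) : measurable_fun setT (graph_tensor F W).
Proof.
apply: measurable_prod => i _; under eq_fun do rewrite big_mkcond.
apply: measurable_prod => j _; case: (_ && _); last exact: measurable_cst.
exact: measurableT_comp mW (measurable_fun_pair (measurable_tnth i) (measurable_tnth j)).
Qed.

Lemma measurable_support_F k (F : rel 'I_k) : measurable (support_F F W).
Proof.
have -> : support_F F W = graph_tensor F W @^-1` [set~ 0].
  by apply/seteqP; split => x /= /eqP.
rewrite -[X in measurable X]setTI; apply: measurable_graph_tensor => //.
exact: measurableC.
Qed.

Lemma fractional_F_cover_ae {nu : probability T R} {k} {F : rel 'I_k} {c : T -> R} :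
  fractional_F_cover nu F W c ->
  {ae prod_prob nu k, forall x, support_F F W x -> 1 <= \sum_(i < k) c (tnth x i)}.
Proof.
case=> mc _ null; exists (support_F F W `&` [set x | \sum_(i < k) c (tnth x i) < 1]).
split; last by move=> x /= /not_implyP[Fx /negP]; rewrite -ltNge.
- apply: measurableI; first exact: measurable_support_F.
  rewrite -preimage_itvNyo -[X in measurable X]setTI.
  apply: measurable_sum => // i; exact: measurableT_comp mc (measurable_tnth i).
- by rewrite prod_probE.
Qed.

End graph_support.

Lemma not_fractional_F_cover0 {d : measure_display} {T : measurableType d} {R : realType}
    (mu : set T -> \bar R) (F : rel 'I_0) (W : T -> T -> R) (c : T -> R) :
  ~ fractional_F_cover mu F W c.
Proof.
case=> _ _ /=; rewrite indicE mem_set => [[]/eqP|]; first by rewrite oner_eq0.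
by split; rewrite /support_F /graph_tensor /= !big_ord0 ?oner_neq0.
Qed.

Theorem proposition4p1 (d : measure_display) (T : measurableType d)
    (R : realType) (nu : probability T R)
    (Hborel : standard_borel T R) (Hatomless : atomless nu)
    (W : T -> T -> R) (HW : graphon nu W)
    (k : nat) (F : rel 'I_k) (Fsym : symmetric F) (Firr : irreflexive F)
    (c : T -> R) (Hc : fractional_F_cover nu F W c)
    (t : k.-tuple T -> R) (Ht : F_tiling nu F W t)
    (Ht1 : forall x, t x <= 1) :
  (tiling_size nu t <= cover_size nu c)%E.
Proof.
have [mW _ _] := HW.
case: k => [|n] in F Fsym Firr c Hc t Ht Ht1 *.
  by move/not_fractional_F_cover0: Hc.
have cover_ae := fractional_F_cover_ae mW Hc.
case: Hc => mc c01 _; case: Ht => mt t0 t_supp t_load.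
have c0 y : 0 <= c y by case/andP: (c01 y).
rewrite /tiling_size /cover_size -!prod_probE in t_load *.
have cover_sum_ge1 : {ae prod_prob nu n.+1,
    forall x, t x != 0 -> 1 <= \sum_(i < n.+1) c (tnth x i)}.
  by apply: filterS cover_ae => x + /t_supp; apply.
apply: le_trans (ge0_le_integral_mulr_ae _ _ _ mt _ t0 _ cover_sum_ge1) _.
- by apply: measurable_sum => // i; exact: measurableT_comp mc (measurable_tnth i).
- by move=> x; apply: sumr_ge0.
rewrite integral_mul_sum_tnth //; apply: ge0_le_integral => //.
- move=> y _; rewrite mule_ge0 ?lee_fin // sume_ge0 // => i _.
  by apply: integral_ge0 => s _; rewrite lee_fin.
- apply: emeasurable_funM; first exact/measurable_EFinP.
  by apply: emeasurable_sum => i; exact: measurable_integral_insert_at.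
- exact/measurable_EFinP.
by move=> y _; rewrite -[leRHS]mule1 lee_wpmul2l ?lee_fin.
Qed.
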